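(* If $\mathbb{K}$ is an infinite field of characteristic $p>2$, then $I_p\subseteq T_2(E_{0^*}\otimes E_0)$.
   Context: $E$ is the Grassmann algebra of a vector space with countable basis $e_1,e_2,\dots$ (generated by the $e_i$ with $e_ie_j=-e_je_i$), with canonical $\mathbb{Z}_2$-grading $E=E^{(0)}\oplus E^{(1)}$ (even/odd length monomials). $A=E\otimes E$ has the $\mathbb{Z}_2\times\mathbb{Z}_2$-grading $A_{(a,b)}=E^{(a)}\otimes E^{(b)}$. $E_{0^*}\otimes E_0$ denotes $A$ with the $\mathbb{Z}_2$-grading $A_0=A_{(0,0)}\oplus A_{(1,0)}$, $A_1=A_{(0,1)}\oplus A_{(1,1)}$. $\mathbb{K}\langle Y\cup Z\rangle$ is the free associative algebra on disjoint countable sets $Y=\{y_1,\dots\}$ (degree $0$) and $Z=\{z_1,\dots\}$ (degree $1$). $T_2(A)$ is the set of $\mathbb{Z}_2$-graded identities: polynomials vanishing under every substitution of the $y_i$ by elements of $A_0$ and the $z_i$ by elements of $A_1$. A $T_2$-ideal is an ideal stable under all graded endomorphisms (sending $y_i$ to degree-$0$ and $z_i$ to degree-$1$ polynomials). Notation: $[a,b]=ab-ba$, $[a_1,\dots,a_n]=[[a_1,\dots,a_{n-1}],a_n]$, $a\circ b=ab+ba$. $I_p$ is the $T_2$-ideal generated by: (1) $[y_1,y_2,y_3]$, $[y_1,y_2,z_3]$; (2) $[y_1,z_2,y_3]$; (3) $[y_1,z_2]\circ z_3$; (4) $[z_1\circ z_2,z_3]$; (5) $(z_1\circ z_2)(z_3\circ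 z_4)-(z_1\circ z_3)(z_2\circ z_4)$; (6) $[x_1,y_2][y_3,x_4]+[x_1,y_3][y_2,x_4]$ for all choices $x_1\in\{y_1,z_1\}$, $x_4\in\{y_4,z_4\}$; (7) $[y_1,z_2](z_3\circ z_4)-[y_1,z_3](z_2\circ z_4)$; (8) $[y_1,z_1]\cdots[y_{2k-2},z_1](z_2\circ z_1)z_1^{2n}$ and (9) $[y_1,z_1]\cdots[y_{2k-1},z_1]z_1^{2n}$, for all integers $k\ge1$, $n\ge0$ with $2n+2k-1=p$. *)

From HB Require Import structures.
From mathcomp Require Import all_boot all_order all_algebra.
Set Implicit Arguments. Unset Strict Implicit. Unset Printing Implicit Defensive.
Import Order.TTheory GRing.Theory Num.Theory.
Local Open Scope ring_scope.

Section Defs.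
Variable K : fieldType.

(* The free associative algebra K<Y u Z>.                             *)
(* A variable is (b, i): b = false means y_i (degree 0),               *)
(*                        b = true  means z_i (degree 1).              *)
(* Elements are formal K-linear combinations of words, i.e. lists of   *)
(* (coefficient, word); two formal sums denote the same element iff    *)
(* their coefficient functions agree ([fpeq]).                         *)
Definition fvarT := (bool * nat)%type.
Definition fword := seq fvarT.
Definition fpoly := seq (K * fword).

Definition fcoef (p : fpoly) (w : fword) : K := \sum_(m <- p | m.2 == w) m.1.
Definition fpeq (p q : fpoly) : Prop := forall w, fcoef p w = fcoef q w.

Definition fzero : fpoly := [::].
Definition fone : fpoly := [:: (1, [::])].
Definition fvar (v : fvarT) : fpoly := [:: (1, [:: v])].
Definition fadd (p q : fpoly) : fpoly := p ++ q.
Definition fscale (c : K) (p : fpoly) : fpoly := [seq (c * m.1, m.2) | m <- p].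
Definition fsub (p q : fpoly) : fpoly := fadd p (fscale (-1) q).
Definition fmul (p q : fpoly) : fpoly :=
  [seq (a.1 * b.1, a.2 ++ b.2) | a <- p, b <- q].
Definition fprod (ps : seq fpoly) : fpoly := foldr fmul fone ps.

Definition y (i : nat) : fpoly := fvar (false, i).
Definition z (i : nat) : fpoly := fvar (true, i).
Definition fcomm (a b : fpoly) : fpoly := fsub (fmul a b) (fmul b a).
Definition fcirc (a b : fpoly) : fpoly := fadd (fmul a b) (fmul b a).

Definition wdeg (w : fword) : bool := odd (count fst w).
(* p is homogeneous of degree d (the zero polynomial is homogeneous of any degree). *)
Definition fhomog (p : fpoly) (d : bool) : Prop :=
  forall w, fcoef p w != 0 -> wdeg w = d.

Definition fsubst (s : fvarT -> fpoly) (p : fpoly) : fpoly :=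
  flatten [seq fscale m.1 (fprod (map s m.2)) | m <- p].
Definition graded_endo (s : fvarT -> fpoly) : Prop :=
  forall v, fhomog (s v) v.1.

Definition isT2ideal (J : fpoly -> Prop) : Prop :=
     (forall p q, fpeq p q -> J p -> J q)
  /\ J fzero
  /\ (forall p q, J p -> J q -> J (fadd p q))
  /\ (forall c p, J p -> J (fscale c p))
  /\ (forall p q, J p -> J (fmul q p) /\ J (fmul p q))
  /\ (forall s p, graded_endo s -> J p -> J (fsubst s p)).

Definition Ip_gens (p : nat) (g : fpoly) : Prop :=
     g = fcomm (fcomm (y 1) (y 2)) (y 3)
  \/ g = fcomm (fcomm (y 1) (y 2)) (z 3)
  \/ g = fcomm (fcomm (y 1) (z 2)) (y 3)
  \/ g = fcirc (fcomm (y 1) (z 2)) (z 3)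
  \/ g = fcomm (fcirc (z 1) (z 2)) (z 3)
  \/ g = fsub (fmul (fcirc (z 1) (z 2)) (fcirc (z 3) (z 4)))
              (fmul (fcirc (z 1) (z 3)) (fcirc (z 2) (z 4)))
  \/ (exists b1 b4 : bool,
        g = fadd (fmul (fcomm (fvar (b1, 1%N)) (y 2)) (fcomm (y 3) (fvar (b4, 4%N))))
                 (fmul (fcomm (fvar (b1, 1%N)) (y 3)) (fcomm (y 2) (fvar (b4, 4%N)))))
  \/ g = fsub (fmul (fcomm (y 1) (z 2)) (fcirc (z 3) (z 4)))
              (fmul (fcomm (y 1) (z 3)) (fcirc (z 2) (z 4)))
  \/ (exists k n : nat, [/\ (1 <= k)%N, (2 * n + 2 * k - 1)%N = p &
        g = fmul (fprod [seq fcomm (y i) (z 1) | i <- iota 1 (2 * k - 2)])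
                 (fmul (fcirc (z 2) (z 1)) (fprod (nseq (2 * n) (z 1))))])
  \/ (exists k n : nat, [/\ (1 <= k)%N, (2 * n + 2 * k - 1)%N = p &
        g = fmul (fprod [seq fcomm (y i) (z 1) | i <- iota 1 (2 * k - 1)])
                 (fprod (nseq (2 * n) (z 1)))]).

Definition in_Ip (p : nat) (f : fpoly) : Prop :=
  forall J, isT2ideal J -> (forall g, Ip_gens p g -> J g) -> J f.

(* The Grassmann algebra E (basis e_i, i : nat) and A = E (x) E.       *)
(* A word u : seq nat stands for the product e_{u_1} ... e_{u_k};      *)
(* it equals esign u * e_{sort u}, where esign u = 0 if u has a        *)
(* repeated index and (-1)^(#inversions of u) otherwise.               *)
(* Elements of A are formal sums of (c, (u, v)) standing for           *)
(* c * (e_u (x) e_v); the coefficient on the basis element             *)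
(* e_S (x) e_T (S, T strictly increasing) is [acoef x S T].            *)
Fixpoint ninv (w : seq nat) : nat :=
  match w with
  | [::] => 0
  | a :: s => (count (fun b => b < a) s + ninv s)%N
  end.
Definition esign (w : seq nat) : K := if uniq w then (-1) ^+ ninv w else 0.

Definition aform := seq (K * (seq nat * seq nat)).
Definition acoef (x : aform) (S T : seq nat) : K :=
  \sum_(m <- x | (sort leq m.2.1 == S) && (sort leq m.2.2 == T))
     m.1 * esign m.2.1 * esign m.2.2.
Definition azero (x : aform) : Prop := forall S T, acoef x S T = 0.

Definition aone : aform := [:: (1, ([::], [::]))].
(* (a (x) b)(c (x) d) = ac (x) bd *)
Definition amul (x x' : aform) : aform :=
  [seq (a.1 * b.1, (a.2.1 ++ b.2.1, a.2.2 ++ b.2.2)) | a <- x, b <- x'].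

(* The Z_2-grading of E_{0*} (x) E_0: degree given by the parity of the
   length in the second tensor factor. *)
Definition A0 (x : aform) : Prop := forall S T, odd (size T) -> acoef x S T = 0.
Definition A1 (x : aform) : Prop := forall S T, ~~ odd (size T) -> acoef x S T = 0.

Definition graded_assign (phi : fvarT -> aform) : Prop :=
  forall v, if v.1 then A1 (phi v) else A0 (phi v).

Definition aeval (phi : fvarT -> aform) (f : fpoly) : aform :=
  flatten [seq [seq (m.1 * a.1, a.2) | a <- foldr amul aone (map phi m.2)]
          | m <- f].

Definition T2_E0sE0 (f : fpoly) : Prop :=
  forall phi, graded_assign phi -> azero (aeval phi f).

End Defs.

(* A graded
   substitution sends every variable to a sum of basis tensors whose second
   factor has the parity of the variable, and two basis tensors commute up to
   the sign (-1)^(|u||u'| + |v||v'|).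
   The generators (1)-(8) are multilinear: expanding every variable into basis
   tensors and reordering each monomial reduces them to a sign identity that
   only depends on the parities of the first factors, which is checked case by
   case.
   For (9) and (10) split every value according to the parity of its first
   factor. Then [y_i, z_1] and z_2 o z_1 are of the form x W, where W is the
   odd-odd part of z_1 and x anticommutes, resp. commutes, with W; moreover
   z_1^2 = W^2, since the even-odd part of z_1 squares to zero (this uses
   p <> 2) and anticommutes with W. Moving all factors W to the right yields
   A W^p, and W^p = 0 because W is a sum of commuting square-zero basis tensors
   and p is the characteristic. *)

From Pilot Require Import Defs.
From HB Require Import structures.
From mathcomp Require Import all_boot all_order all_algebra.
From mathcomp Require Import zify ring.
Set Implicit Arguments. Unset Strict Implicit. Unset Printing Implicit Defensive.
Import GRing.Theory.
Local Open Scope ring_scope.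

Definition ncross (a b : seq nat) : nat :=
  sumn [seq count (fun y => (y < x)%N) b | x <- a].

Lemma ninv_cat a b : ninv (a ++ b) = (ninv a + ninv b + ncross a b)%N.
Proof.
elim: a => [|x a IH] /=; first by rewrite /ncross /=; lia.
rewrite /ncross /= -/(ncross a b) IH count_cat; lia.
Qed.

Lemma ncross_perml a a' b : perm_eq a a' -> ncross a b = ncross a' b.
Proof. by move=> h; apply: perm_sumn; apply: perm_map. Qed.

Lemma ncross_permr a b b' : perm_eq b b' -> ncross a b = ncross a b'.
Proof. by move/permP=> h; rewrite /ncross; congr sumn; apply: eq_map => x. Qed.

Lemma ninv_sorted s : sorted leq s -> ninv s = 0%N.
Proof.
elim: s => [|x s IH] //= hs; rewrite IH ?(path_sorted hs) // addn0.
apply/eqP; rewrite -leqn0 leqNgt -has_count; apply/hasP => -[y ys].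
by move/allP: (order_path_min leq_trans hs) => /(_ y ys); rewrite leqNgt => /negbTE ->.
Qed.

Lemma count_lt_gt x s : x \notin s ->
  (count (fun y => (y < x)%N) s + count (fun y => (x < y)%N) s)%N = size s.
Proof.
elim: s => [|y s IH] //=; rewrite inE negb_or => /andP[xy /IH <-].
case: (ltngtP y x) => [||exy]; [lia | lia | by rewrite exy eqxx in xy].
Qed.

Lemma ncrossC a b : uniq (a ++ b) -> (ncross a b + ncross b a)%N = (size a * size b)%N.
Proof.
elim: a => [|x a IH] /=; first by move=> _; rewrite /ncross /=; elim: b => //= y b.
move=> /andP[]; rewrite mem_cat negb_or => /andP[_ xb] /IH {}IH.
have ncross_cons b' : ncross b' (x :: a) = (count (fun y => (x < y)%N) b' + ncross b' a)%N.
  by elim: b' => [|y b' IHb] //=; rewrite /ncross /= -/(ncross b' (x :: a)) -/(ncross b' a) IHb; lia.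
have -> : ncross (x :: a) b = (count (fun y => (y < x)%N) b + ncross a b)%N by [].
rewrite ncross_cons mulSn -IH -(count_lt_gt xb); lia.
Qed.

Section Signs.
Variable K : fieldType.
Local Notation esign := (@esign K).

Lemma esign_nuniq w : ~~ uniq w -> esign w = 0.
Proof. by rewrite /Defs.esign => /negbTE ->. Qed.

Lemma esign_sort u : esign (sort leq u) = (uniq u)%:R.
Proof.
rewrite /Defs.esign sort_uniq; case: (uniq u) => //.
by rewrite ninv_sorted ?expr0 // sort_sorted //; exact: leq_total.
Qed.

Lemma esign_catl u w : esign (u ++ w) = esign u * esign (sort leq u ++ w).
Proof.
have hp : perm_eq u (sort leq u) by rewrite perm_sym perm_sort.
rewrite /Defs.esign.
have -> : uniq (sort leq u ++ w) = uniq (u ++ w) by apply: perm_uniq; rewrite perm_cat2r perm_sort.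
case hu: (uniq (u ++ w)); last by case: (uniq u); rewrite ?mul0r ?mulr0.
move: hu; rewrite cat_uniq => /andP[-> _].
rewrite !ninv_cat (ninv_sorted (sort_sorted leq_total u)) (ncross_perml w hp) -exprD.
by congr (_ ^+ _); lia.
Qed.

Lemma esign_catr u w : esign (w ++ u) = esign u * esign (w ++ sort leq u).
Proof.
have hp : perm_eq u (sort leq u) by rewrite perm_sym perm_sort.
rewrite /Defs.esign.
have -> : uniq (w ++ sort leq u) = uniq (w ++ u) by apply: perm_uniq; rewrite perm_cat2l perm_sort.
case hu: (uniq (w ++ u)); last by case: (uniq u); rewrite ?mul0r ?mulr0.
move: hu; rewrite cat_uniq => /and3P[_ _ ->].
rewrite !ninv_cat (ninv_sorted (sort_sorted leq_total u)) (ncross_permr w hp) -exprD.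
by congr (_ ^+ _); lia.
Qed.

Lemma esign_catC a b : esign (a ++ b) = (-1) ^+ (size a * size b) * esign (b ++ a).
Proof.
rewrite /Defs.esign uniq_catC.
case hu: (uniq (b ++ a)); last by rewrite mulr0.
have := ncrossC (etrans (uniq_catC a b) hu); rewrite !ninv_cat => h.
rewrite -exprD -[LHS]signr_odd -[RHS]signr_odd; congr (_ ^+ (nat_of_bool _)).
have -> : (size a * size b + (ninv b + ninv a + ncross b a)
          = (ninv a + ninv b + ncross a b) + ncross b a * 2)%N by rewrite -h; lia.
by rewrite [in RHS]oddD oddM andbF addbF.
Qed.

End Signs.
Arguments esign_nuniq {K}. Arguments esign_catl {K}. Arguments esign_catr {K}.
Arguments esign_catC {K}.

Lemma sum_if_eq_uniq (V : nmodType) (I : eqType) (ks : seq I) k0 (F : I -> V) :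
  uniq ks -> k0 \in ks -> \sum_(k <- ks) (if k == k0 then F k else 0) = F k0.
Proof. by move=> u m; rewrite -big_mkcond -big_filter filter_pred1_uniq // big_seq1. Qed.

Lemma prodr_nseq (R : pzSemiRingType) (I : Type) (F : I -> R) n a :
  \prod_(i <- nseq n a) F i = F a ^+ n.
Proof. by elim: n => [|n IH]; rewrite ?big_nil ?expr0 //= big_cons IH exprS. Qed.

Lemma sort_catl (u w : seq nat) : sort leq (u ++ w) = sort leq (sort leq u ++ w).
Proof. by apply/(perm_sortP leq_total leq_trans anti_leq); rewrite perm_cat2r perm_sym perm_sort. Qed.

Lemma sort_catr (u w : seq nat) : sort leq (w ++ u) = sort leq (w ++ sort leq u).
Proof. by apply/(perm_sortP leq_total leq_trans anti_leq); rewrite perm_cat2l perm_sym perm_sort. Qed.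

Lemma sort_catC (u w : seq nat) : sort leq (u ++ w) = sort leq (w ++ u).
Proof. by apply/(perm_sortP leq_total leq_trans anti_leq); rewrite perm_catC. Qed.

Section TensorForms.
Variable K : fieldType.
Local Notation aform := (aform K).
Local Notation acoef := (@acoef K).
Local Notation esign := (@esign K).
Local Notation term := (K * (seq nat * seq nat))%type.

(* The term [(c, (u, v))] equals [tweight] times the basis tensor indexed by [tkey]. *)
Definition tkey (m : term) := (sort leq m.2.1, sort leq m.2.2).
Definition tweight (m : term) : K := m.1 * esign m.2.1 * esign m.2.2.
Definition tcoef (m : term) (S T : seq nat) : K :=
  if tkey m == (S, T) then tweight m else 0.
Definition tmul (a b : term) : term := (a.1 * b.1, (a.2.1 ++ b.2.1, a.2.2 ++ b.2.2)).
Definition ascale (c : K) (x : aform) : aform := [seq (c * m.1, m.2) | m <- x].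
Definition aequiv (x x' : aform) := forall S T, acoef x S T = acoef x' S T.

Lemma acoefE x S T : acoef x S T = \sum_(m <- x) tcoef m S T.
Proof. by rewrite /Defs.acoef big_mkcond; apply: eq_bigr => m _; rewrite /tcoef xpair_eqE. Qed.

Lemma acoef_nil S T : acoef [::] S T = 0.
Proof. by rewrite acoefE big_nil. Qed.

Lemma acoef_seq1 m S T : acoef [:: m] S T = tcoef m S T.
Proof. by rewrite acoefE big_seq1. Qed.

Lemma acoef_cat x x' S T : acoef (x ++ x') S T = acoef x S T + acoef x' S T.
Proof. by rewrite !acoefE big_cat. Qed.

Lemma acoef_amul x x' S T :
  acoef (amul x x') S T = \sum_(a <- x) \sum_(b <- x') tcoef (tmul a b) S T.
Proof. by rewrite acoefE /amul big_allpairs_dep. Qed.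

Lemma tcoef_scale c m S T : tcoef (c * m.1, m.2) S T = c * tcoef m S T.
Proof. by rewrite /tcoef /tkey /tweight /=; case: ifP; rewrite ?mulr0 // !mulrA. Qed.

Lemma acoef_ascale c x S T : acoef (ascale c x) S T = c * acoef x S T.
Proof. by rewrite !acoefE big_map mulr_sumr; apply: eq_bigr => m _; rewrite tcoef_scale. Qed.

Lemma acoef_nokey x S T : (S, T) \notin map tkey x -> acoef x S T = 0.
Proof.
move=> h; rewrite acoefE big1_seq // => m /andP[_ mx]; rewrite /tcoef; case: eqP => // e.
by rewrite -e map_f in h.
Qed.

Lemma acoef_nuniq x S T : ~~ (uniq S && uniq T) -> acoef x S T = 0.
Proof.
move=> h; rewrite acoefE big1 // => m _; rewrite /tcoef; case: eqP => // -[eS eT].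
rewrite /tweight; move: h; rewrite -eS -eT !sort_uniq negb_and.
by case/orP => /esign_nuniq ->; rewrite ?mulr0 ?mul0r.
Qed.

Lemma sum_weight_by_key (x : aform) (H : seq nat * seq nat -> K) ks :
  uniq ks -> {subset map tkey x <= ks} ->
  \sum_(m <- x) tweight m * H (tkey m) = \sum_(k <- ks) acoef x k.1 k.2 * H k.
Proof.
move=> uks sub.
transitivity (\sum_(m <- x) \sum_(k <- ks) (if k == tkey m then tweight m * H k else 0)).
  by apply: eq_big_seq => m mx; rewrite sum_if_eq_uniq // sub // map_f.
rewrite exchange_big; apply: eq_bigr => k _.
rewrite acoefE mulr_suml; apply: eq_bigr => m _.
by rewrite /tcoef -surjective_pairing (eq_sym k); case: ifP => _; rewrite ?mul0r.
Qed.

Lemma sum_weight_aequiv (x x' : aform) (H : seq nat * seq nat -> K) : aequiv x x' ->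
  \sum_(m <- x) tweight m * H (tkey m) = \sum_(m <- x') tweight m * H (tkey m).
Proof.
move=> e; pose ks := undup (map tkey x ++ map tkey x').
rewrite (@sum_weight_by_key x H ks (undup_uniq _)); last by move=> k kx; rewrite mem_undup mem_cat kx.
rewrite (@sum_weight_by_key x' H ks (undup_uniq _)); last by move=> k kx; rewrite mem_undup mem_cat kx orbT.
by apply: eq_bigr => k _; rewrite e.
Qed.

Lemma tcoef_tmull a b S T : tcoef (tmul a b) S T = tweight a * tcoef (tmul (1, tkey a) b) S T.
Proof.
rewrite /tcoef /tkey /tmul /= -sort_catl -sort_catl.
case: ifP => _; last by rewrite mulr0.
rewrite /tweight /= (esign_catl a.2.1) (esign_catl a.2.2); ring.
Qed.

Lemma tcoef_tmulr a b S T : tcoef (tmul a b) S T = tweight b * tcoef (tmul a (1, tkey b)) S T.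
Proof.
rewrite /tcoef /tkey /tmul /= -sort_catr -sort_catr.
case: ifP => _; last by rewrite mulr0.
rewrite /tweight /= (esign_catr b.2.1) (esign_catr b.2.2); ring.
Qed.

Lemma amul_aequivl x x' y : aequiv x x' -> aequiv (amul x y) (amul x' y).
Proof.
move=> e S T; rewrite !acoef_amul.
pose H k := \sum_(b <- y) tcoef (tmul (1, k) b) S T.
have E z : \sum_(a <- z) \sum_(b <- y) tcoef (tmul a b) S T = \sum_(a <- z) tweight a * H (tkey a).
  by apply: eq_bigr => a _; rewrite mulr_sumr; apply: eq_bigr => b _; rewrite tcoef_tmull.
by rewrite !E; exact: sum_weight_aequiv.
Qed.

Lemma amul_aequivr x y y' : aequiv y y' -> aequiv (amul x y) (amul x y').
Proof.
move=> e S T; rewrite !acoef_amul exchange_big [in RHS]exchange_big.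
pose H k := \sum_(a <- x) tcoef (tmul a (1, k)) S T.
have E z : \sum_(b <- z) \sum_(a <- x) tcoef (tmul a b) S T = \sum_(b <- z) tweight b * H (tkey b).
  by apply: eq_bigr => b _; rewrite mulr_sumr; apply: eq_bigr => a _; rewrite tcoef_tmulr.
by rewrite !E; exact: sum_weight_aequiv.
Qed.

Definition eqa (x x' : aform) : bool :=
  all (fun k => acoef x k.1 k.2 == acoef x' k.1 k.2) (map tkey x ++ map tkey x').

Lemma eqaP x x' : reflect (aequiv x x') (eqa x x').
Proof.
apply: (iffP allP) => [h S T | h k _]; last by apply/eqP.
case: (boolP ((S, T) \in map tkey x ++ map tkey x')) => [/h/eqP //|].
by rewrite mem_cat negb_or => /andP[hx hx']; rewrite !acoef_nokey.
Qed.

Lemma eqa_refl : reflexive eqa. Proof. by move=> x; apply/eqaP. Qed.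
Lemma eqa_sym : symmetric eqa.
Proof. by move=> x x'; apply/eqaP/eqaP => h S T; rewrite h. Qed.
Lemma eqa_trans : transitive eqa.
Proof. by move=> x' x x'' /eqaP h1 /eqaP h2; apply/eqaP => S T; rewrite h1 h2. Qed.

End TensorForms.
Arguments tkey {K}. Arguments tweight {K}. Arguments tcoef {K}. Arguments tmul {K}.
Arguments ascale {K}.

Section TensorAlgebra.
Local Open Scope quotient_scope.
Variable K : fieldType.
Local Notation aform := (aform K).
Local Notation acoef := (@acoef K).

Canonical eqa_equiv := EquivRel (@eqa K) (@eqa_refl K) (@eqa_sym K) (@eqa_trans K).

Definition EE := {eq_quot (@eqa K)}.
HB.instance Definition _ : EqQuotient _ (@eqa K) EE := EqQuotient.on EE.
HB.instance Definition _ := Choice.on EE.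

Lemma piEE_eq x x' : aequiv x x' -> \pi_EE x = \pi_EE x'.
Proof. by move=> h; apply/eqmodP/eqaP. Qed.

Lemma piEE_eqP x x' : \pi_EE x = \pi_EE x' -> aequiv x x'.
Proof. by move/eqmodP/eqaP. Qed.

Lemma acoef_repr x S T : acoef (repr (\pi_EE x)) S T = acoef x S T.
Proof. by apply: piEE_eqP; rewrite reprK. Qed.

Definition qadd := lift_op2 EE cat.
Lemma pi_add : {morph \pi_EE : x x' / x ++ x' >-> qadd x x'}.
Proof. by move=> x x'; unlock qadd; apply: piEE_eq => S T; rewrite !acoef_cat !acoef_repr. Qed.
Canonical pi_add_morph := PiMorph2 pi_add.

Definition qscale (c : K) := lift_op1 EE (ascale c).
Lemma pi_scale c : {morph \pi_EE : x / ascale c x >-> qscale c x}.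
Proof. by move=> x; unlock qscale; apply: piEE_eq => S T; rewrite !acoef_ascale !acoef_repr. Qed.
Canonical pi_scale_morph c := PiMorph1 (pi_scale c).

Definition qmul := lift_op2 EE (@amul K).
Lemma pi_mul : {morph \pi_EE : x x' / amul x x' >-> qmul x x'}.
Proof.
move=> x x'; unlock qmul; apply: piEE_eq => S T.
rewrite (amul_aequivl _ (fun S T => esym (acoef_repr x S T))).
by rewrite (amul_aequivr _ (fun S T => esym (acoef_repr x' S T))).
Qed.
Canonical pi_mul_morph := PiMorph2 pi_mul.

Definition qzero : EE := \pi_EE [::].
Definition qone : EE := \pi_EE (aone K).
Definition qopp := qscale (-1).

Lemma qaddA : associative qadd.
Proof. by elim/quotW=> x; elim/quotW=> x'; elim/quotW=> x''; rewrite !piE catA. Qed.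
Lemma qaddC : commutative qadd.
Proof.
by elim/quotW=> x; elim/quotW=> x'; rewrite !piE; apply: piEE_eq => S T; rewrite !acoef_cat addrC.
Qed.
Lemma qadd0 : left_id qzero qadd.
Proof. by elim/quotW=> x; rewrite /qzero !piE. Qed.
Lemma qaddN : left_inverse qzero qopp qadd.
Proof.
elim/quotW=> x; rewrite /qopp /qzero !piE; apply: piEE_eq => S T.
by rewrite acoef_cat acoef_ascale acoef_nil mulN1r addNr.
Qed.
HB.instance Definition _ := GRing.isZmodule.Build EE qaddA qaddC qadd0 qaddN.

Lemma qmulA : associative qmul.
Proof.
elim/quotW=> x; elim/quotW=> x'; elim/quotW=> x''; rewrite !piE; apply: piEE_eq => S T.
rewrite !acoefE /amul !big_allpairs_dep; apply: eq_bigr => a _.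
rewrite big_allpairs_dep; apply: eq_bigr => b _; apply: eq_bigr => c _.
by rewrite /tmul /= mulrA !catA.
Qed.
Lemma qmul1 : left_id qone qmul.
Proof.
elim/quotW=> x; rewrite /qone !piE; apply: piEE_eq => S T.
rewrite acoef_amul big_seq1 acoefE; apply: eq_bigr => b _.
by rewrite /tmul /= mul1r -!surjective_pairing.
Qed.
Lemma qmulr1 : right_id qone qmul.
Proof.
elim/quotW=> x; rewrite /qone !piE; apply: piEE_eq => S T.
rewrite acoef_amul acoefE; apply: eq_bigr => b _.
by rewrite big_seq1 /tmul /= mulr1 !cats0 -!surjective_pairing.
Qed.
Lemma qmulDl : left_distributive qmul qadd.
Proof.
elim/quotW=> x; elim/quotW=> x'; elim/quotW=> x''; rewrite !piE; apply: piEE_eq => S T.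
by rewrite acoef_cat !acoef_amul big_cat.
Qed.
Lemma qmulDr : right_distributive qmul qadd.
Proof.
elim/quotW=> x; elim/quotW=> x'; elim/quotW=> x''; rewrite !piE; apply: piEE_eq => S T.
by rewrite acoef_cat !acoef_amul -big_split; apply: eq_bigr => a _; rewrite big_cat.
Qed.
Lemma qone_neq0 : qone != 0.
Proof.
apply/negP => /eqP /piEE_eqP /(_ [::] [::]).
rewrite acoef_seq1 acoef_nil /tcoef /tkey /tweight /Defs.esign /= !mulr1 => /eqP.
by rewrite oner_eq0.
Qed.
HB.instance Definition _ :=
  GRing.Zmodule_isNzRing.Build EE qmulA qmul1 qmulr1 qmulDl qmulDr qone_neq0.

Lemma qscaleA a b v : qscale a (qscale b v) = qscale (a * b) v.
Proof. by elim/quotW: v => x; rewrite !piE; apply: piEE_eq => S T; rewrite !acoef_ascale mulrA. Qed.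
Lemma qscale1 : left_id 1 qscale.
Proof. by elim/quotW=> x; rewrite !piE; apply: piEE_eq => S T; rewrite acoef_ascale mul1r. Qed.
Lemma qscaleDr : right_distributive qscale qadd.
Proof. by move=> a; elim/quotW=> x; elim/quotW=> x'; rewrite !piE /ascale map_cat. Qed.
Lemma qscaleDl v : {morph qscale^~ v : a b / a + b >-> qadd a b}.
Proof.
move=> a b; elim/quotW: v => x; rewrite !piE; apply: piEE_eq => S T.
by rewrite acoef_cat !acoef_ascale mulrDl.
Qed.
HB.instance Definition _ := GRing.Zmodule_isLmodule.Build K EE qscaleA qscale1 qscaleDr qscaleDl.

Lemma qscaleAl (a : K) (u v : EE) : qscale a (qmul u v) = qmul (qscale a u) v.
Proof.
elim/quotW: u => x; elim/quotW: v => x'; rewrite !piE; apply: piEE_eq => S T.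
rewrite acoef_ascale !acoef_amul big_map mulr_sumr; apply: eq_bigr => m _.
by rewrite mulr_sumr; apply: eq_bigr => b _; rewrite -tcoef_scale /tmul /= mulrA.
Qed.
HB.instance Definition _ := GRing.Lmodule_isLalgebra.Build K EE qscaleAl.

Lemma qscaleAr (a : K) (u v : EE) : qscale a (qmul u v) = qmul u (qscale a v).
Proof.
elim/quotW: u => x; elim/quotW: v => x'; rewrite !piE; apply: piEE_eq => S T.
rewrite acoef_ascale !acoef_amul mulr_sumr; apply: eq_bigr => m _.
by rewrite big_map mulr_sumr; apply: eq_bigr => b _; rewrite -tcoef_scale /tmul /= mulrCA mulrA.
Qed.
HB.instance Definition _ := GRing.Lalgebra_isAlgebra.Build K EE qscaleAr.

End TensorAlgebra.
Arguments EE : clear implicits.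

Section Evaluation.
Local Open Scope quotient_scope.
Variable K : fieldType.
Local Notation aform := (aform K).
Local Notation acoef := (@acoef K).
Local Notation term := (K * (seq nat * seq nat))%type.
Local Notation EE := (EE K).
Local Notation pi := (\pi_EE : aform -> EE).

Lemma piD x x' : pi (x ++ x') = pi x + pi x'. Proof. exact: pi_add. Qed.
Lemma piZ c x : pi (ascale c x) = c *: pi x. Proof. exact: pi_scale. Qed.
Lemma piM x x' : pi (amul x x') = pi x * pi x'. Proof. exact: pi_mul. Qed.

Lemma pi_eq0P x : pi x = 0 <-> azero x.
Proof.
split => [/piEE_eqP h S T | h]; first by rewrite h acoef_nil.
by apply: (@piEE_eq _ x [::]) => S T; rewrite h acoef_nil.
Qed.

Definition tau (m : term) : EE := pi [:: m].

Lemma pi_sum x : pi x = \sum_(m <- x) tau m.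
Proof. by elim: x => [|m x IH]; rewrite ?big_nil // big_cons -IH -piD. Qed.

Lemma tau_mul a b : tau a * tau b = tau (tmul a b).
Proof. by rewrite -piM. Qed.

Definition bideg (w : seq nat * seq nat) : bool * bool := (odd (size w.1), odd (size w.2)).
Definition bipar (d d' : bool * bool) : bool := (d.1 && d'.1) (+) (d.2 && d'.2).
Definition bisign (d d' : bool * bool) : K := (-1) ^+ bipar d d'.

Lemma tau_comm a b : tau a * tau b = bisign (bideg a.2) (bideg b.2) *: (tau b * tau a).
Proof.
rewrite !tau_mul -piZ; apply: piEE_eq => S T; rewrite !acoef_seq1 /tcoef /tkey /tmul /=.
rewrite (sort_catC a.2.1) (sort_catC a.2.2); case: ifP => _ //.
rewrite /tweight /= (esign_catC a.2.1) (esign_catC a.2.2) /bisign /bipar /=.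
rewrite -!oddM -oddD signr_odd exprD; ring.
Qed.

Lemma tau_sq0 m : (bideg m.2).2 -> tau m * tau m = 0.
Proof.
move=> hv; rewrite tau_mul; apply/pi_eq0P => S T; rewrite acoef_seq1 /tcoef.
case: ifP => // _; rewrite /tweight /tmul /= (esign_nuniq (m.2.2 ++ m.2.2)) ?mulr0 //.
by case: m hv => c [u [|i v]] //= _; rewrite mem_cat inE eqxx orbT.
Qed.

Definition feval (Phi : fvarT -> EE) (f : fpoly K) : EE :=
  \sum_(m <- f) m.1 *: \prod_(v <- m.2) Phi v.

Lemma eq_feval Phi Phi' f : Phi =1 Phi' -> feval Phi f = feval Phi' f.
Proof. by move=> e; apply: eq_bigr => m _; under eq_bigr do rewrite e. Qed.

Lemma prod_pi_word (phi : fvarT -> aform) w :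
  pi (foldr (@amul K) (aone K) (map phi w)) = \prod_(v <- w) pi (phi v).
Proof. by elim: w => [|v w IH]; rewrite ?big_nil ?big_cons //= piM IH. Qed.

Lemma pi_aeval phi f : pi (aeval phi f) = feval (fun v => pi (phi v)) f.
Proof.
rewrite /aeval /feval; elim: f => [|m f IH]; first by rewrite big_nil.
by rewrite big_cons /= piD IH -prod_pi_word -piZ.
Qed.

Lemma T2_evalP f :
  T2_E0sE0 f <-> forall phi, graded_assign phi -> feval (fun v => pi (phi v)) f = 0.
Proof.
split => h phi g; first by rewrite -pi_aeval; apply/pi_eq0P; apply: h.
by apply/pi_eq0P; rewrite pi_aeval; apply: h.
Qed.

Section FevalMorphism.
Variable Phi : fvarT -> EE.
Local Notation feval := (feval Phi).

Lemma feval_add p q : feval (fadd p q) = feval p + feval q.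
Proof. by rewrite /feval big_cat. Qed.
Lemma feval_scale c p : feval (fscale c p) = c *: feval p.
Proof. by rewrite /feval big_map scaler_sumr; apply: eq_bigr => m _; rewrite scalerA. Qed.
Lemma feval_sub p q : feval (fsub p q) = feval p - feval q.
Proof. by rewrite /fsub feval_add feval_scale scaleN1r. Qed.
Lemma feval_mul p q : feval (fmul p q) = feval p * feval q.
Proof.
rewrite /feval /fmul big_allpairs_dep mulr_suml; apply: eq_bigr => a _.
rewrite mulr_sumr; apply: eq_bigr => b _.
by rewrite /= big_cat -scalerAl -scalerAr scalerA.
Qed.
Lemma feval_zero : feval (fzero K) = 0.
Proof. by rewrite /feval big_nil. Qed.
Lemma feval_one : feval (fone K) = 1.
Proof. by rewrite /feval big_seq1 big_nil scale1r. Qed.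
Lemma feval_var v : feval (fvar K v) = Phi v.
Proof. by rewrite /feval !big_seq1 scale1r. Qed.
Lemma feval_prod ps : feval (Defs.fprod ps) = \prod_(r <- ps) feval r.
Proof. by elim: ps => [|q ps IH]; rewrite ?big_nil ?feval_one //= big_cons feval_mul IH. Qed.
Lemma feval_comm a b : feval (fcomm a b) = feval a * feval b - feval b * feval a.
Proof. by rewrite /fcomm feval_sub !feval_mul. Qed.
Lemma feval_circ a b : feval (fcirc a b) = feval a * feval b + feval b * feval a.
Proof. by rewrite /fcirc feval_add !feval_mul. Qed.
Lemma feval_flatten (L : seq (fpoly K)) : feval (flatten L) = \sum_(q <- L) feval q.
Proof. by elim: L => [|q L IH]; rewrite ?big_nil ?big_cons ?feval_zero //= -IH -feval_add. Qed.

Lemma feval_by_word f ws : uniq ws -> {subset map snd f <= ws} ->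
  feval f = \sum_(w <- ws) fcoef f w *: \prod_(v <- w) Phi v.
Proof.
move=> uws sub; rewrite /Evaluation.feval.
transitivity (\sum_(m <- f) \sum_(w <- ws) (if w == m.2 then m.1 *: \prod_(v <- w) Phi v else 0)).
  by apply: eq_big_seq => m mf; rewrite sum_if_eq_uniq // sub // map_f.
rewrite (@exchange_big EE 0 +%R); apply: eq_bigr => w _.
rewrite /fcoef scaler_suml [RHS]big_mkcond; apply: eq_bigr => m _.
by rewrite (eq_sym w); case: ifP => _; rewrite ?scale0r.
Qed.

Lemma feval_fpeq p q : fpeq p q -> feval p = feval q.
Proof.
move=> e; pose ws := undup (map snd p ++ map snd q).
rewrite (@feval_by_word p ws (undup_uniq _)); last by move=> w hw; rewrite mem_undup mem_cat hw.
rewrite (@feval_by_word q ws (undup_uniq _)); last by move=> w hw; rewrite mem_undup mem_cat hw orbT.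
by apply: eq_bigr => w _; rewrite e.
Qed.

End FevalMorphism.

Lemma feval_subst Phi s p : feval Phi (fsubst s p) = feval (fun v => feval Phi (s v)) p.
Proof.
rewrite /fsubst feval_flatten big_map /feval; apply: eq_bigr => m _.
by rewrite -/(feval _ _) feval_scale feval_prod big_map.
Qed.

Definition spanned (P : pred (seq nat * seq nat)) (q : EE) :=
  exists L : aform, all (fun m => P m.2) L /\ q = pi L.

Section Spanned.
Variable P : pred (seq nat * seq nat).

Lemma spanned0 : spanned P 0. Proof. by exists [::]. Qed.
Lemma spannedD a b : spanned P a -> spanned P b -> spanned P (a + b).
Proof. by move=> [L1 [h1 ->]] [L2 [h2 ->]]; exists (L1 ++ L2); rewrite all_cat h1 h2 piD. Qed.
Lemma spannedZ c a : spanned P a -> spanned P (c *: a).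
Proof. by move=> [L [h ->]]; exists (ascale c L); rewrite all_map piZ. Qed.
Lemma spanned_sum I (r : seq I) (F : I -> EE) :
  (forall i, spanned P (F i)) -> spanned P (\sum_(i <- r) F i).
Proof. by move=> h; elim: r => [|i r IH]; rewrite ?big_nil ?big_cons; [exact: spanned0 | exact: spannedD]. Qed.

Lemma spannedM (P' P'' : pred (seq nat * seq nat)) a b :
  (forall w w', P w -> P' w' -> P'' (w.1 ++ w'.1, w.2 ++ w'.2)) ->
  spanned P a -> spanned P' b -> spanned P'' (a * b).
Proof.
move=> hP [L1 [h1 ->]] [L2 [h2 ->]]; exists (amul L1 L2); rewrite piM; split => //.
apply/allP => m /allpairsP [[a' b'] [/= ha hb ->]]; apply: hP.
  exact: (allP h1). exact: (allP h2).
Qed.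

End Spanned.

Definition homog (d : bool) := spanned (fun w => (bideg w).2 == d).
Definition bihomog (d : bool * bool) := spanned (fun w => bideg w == d).

Lemma homog1 : homog false 1. Proof. by exists (aone K). Qed.
Lemma homogM d d' a b : homog d a -> homog d' b -> homog (d (+) d') (a * b).
Proof. by apply: spannedM => w w' /eqP <- /eqP <-; rewrite /bideg /= size_cat oddD. Qed.

Lemma bihomog_comm d d' a b : bihomog d a -> bihomog d' b -> a * b = bisign d d' *: (b * a).
Proof.
move=> [L1 [h1 ->]] [L2 [h2 ->]]; rewrite !pi_sum.
transitivity (\sum_(m <- L1) \sum_(n <- L2) tau m * tau n).
  by rewrite mulr_suml; apply: eq_bigr => m _; rewrite mulr_sumr.
transitivity (\sum_(m <- L1) \sum_(n <- L2) bisign d d' *: (tau n * tau m)); last first.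
  rewrite mulr_suml scaler_sumr (@exchange_big EE 0 +%R) /=; apply: eq_bigr => n _.
  by rewrite mulr_sumr scaler_sumr.
apply: eq_big_seq => m mL1; apply: eq_big_seq => n nL2.
by rewrite tau_comm (eqP (allP h1 m mL1)) (eqP (allP h2 n nL2)).
Qed.

Definition nf_deg (d : bool) (x : aform) : aform :=
  [seq (acoef x k.1 k.2, k) | k <- undup (map tkey x) & odd (size k.2) == d].

Lemma nf_deg_homog d x : all (fun m => (bideg m.2).2 == d) (nf_deg d x).
Proof. by apply/allP => m /mapP [k]; rewrite mem_filter => /andP[h _] ->. Qed.

Lemma pi_nf_deg d x : (forall S T, odd (size T) != d -> acoef x S T = 0) -> pi x = pi (nf_deg d x).
Proof.
move=> hx; apply: piEE_eq => S T; rewrite [in RHS]acoefE /nf_deg big_map.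
have E k : k \in map tkey x ->
    tcoef (acoef x k.1 k.2, k) S T = if k == (S, T) then acoef x S T else 0.
  case/mapP => m _ ->; rewrite /tcoef /tkey /= !(sorted_sort leq_trans (sort_sorted leq_total _)).
  case: eqP => [[<- <-]|//]; rewrite /tweight /= !esign_sort.
  case: (boolP (uniq m.2.1 && uniq m.2.2)) => [/andP[-> ->]|h]; first by rewrite !mulr1.
  by rewrite acoef_nuniq ?mul0r // !sort_uniq.
rewrite (eq_big_seq (fun k => if k == (S, T) then acoef x S T else 0)); last first.
  by move=> k; rewrite mem_filter mem_undup => /andP[_ /E].
case: (boolP ((S, T) \in [seq k <- undup (map tkey x) | odd (size k.2) == d])) => h.
  by rewrite sum_if_eq_uniq // filter_uniq // undup_uniq.
rewrite big1_seq; last by move=> k /andP[_ hk]; case: eqP => // ek; rewrite -ek hk in h.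
move: h; rewrite mem_filter mem_undup negb_and /= => /orP[h|h]; first by rewrite hx.
by rewrite acoef_nokey.
Qed.

Lemma homog_acoef d x : homog d (pi x) -> forall S T, odd (size T) != d -> acoef x S T = 0.
Proof.
move=> [L [hL /piEE_eqP e]] S T hT; rewrite e acoefE big1_seq // => m /andP[_ mL].
rewrite /tcoef; case: eqP => // -[_ eT]; move: (allP hL m mL).
by rewrite /bideg /= -(size_sort leq) eT => /eqP h; rewrite h eqxx in hT.
Qed.

Lemma graded_assignE phi : graded_assign phi <->
  forall v S T, odd (size T) != v.1 -> acoef (phi v) S T = 0.
Proof.
split => h v; move: (h v); rewrite /A0 /A1; case: v.1 => hv S T /=.
- by rewrite eqb_id; apply: hv.
- by rewrite eqbF_neg negbK; apply: hv.
- by move=> hT; apply: hv; rewrite eqb_id.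
- by move=> hT; apply: hv; rewrite eqbF_neg negbK.
Qed.

Lemma graded_nf phi v : graded_assign phi -> pi (phi v) = pi (nf_deg v.1 (phi v)).
Proof. by move/graded_assignE => h; apply: pi_nf_deg; apply: h. Qed.

Lemma graded_homogP phi : graded_assign phi <-> forall v, homog v.1 (pi (phi v)).
Proof.
split => [g v | h].
  by exists (nf_deg v.1 (phi v)); rewrite nf_deg_homog graded_nf.
by apply/graded_assignE => v; apply: homog_acoef.
Qed.

Lemma homog_feval (Phi : fvarT -> EE) q d :
  (forall v, homog v.1 (Phi v)) -> fhomog q d -> homog d (feval Phi q).
Proof.
move=> h hq; rewrite (@feval_by_word Phi q (undup (map snd q)) (undup_uniq _)); last first.
  by move=> w; rewrite mem_undup.
apply: spanned_sum => w; case: (eqVneq (fcoef q w) 0) => [->|nz].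
  by rewrite scale0r; exact: spanned0.
rewrite -(hq w nz); apply: spannedZ; elim: w {nz} => [|v w IH]; first by rewrite big_nil; exact: homog1.
by rewrite big_cons /wdeg /= oddD oddb; apply: homogM.
Qed.

Lemma T2_ideal : isT2ideal (@T2_E0sE0 K).
Proof.
split; [|split; [|split; [|split; [|split]]]].
- by move=> p q e /T2_evalP h; apply/T2_evalP => phi g; rewrite -(feval_fpeq _ e) h.
- by apply/T2_evalP => phi g; rewrite feval_zero.
- move=> p q /T2_evalP hp /T2_evalP hq; apply/T2_evalP => phi g.
  by rewrite feval_add hp ?hq ?addr0.
- by move=> c p /T2_evalP hp; apply/T2_evalP => phi g; rewrite feval_scale hp ?scaler0.
- by move=> p q /T2_evalP hp; split; apply/T2_evalP => phi g; rewrite feval_mul hp ?mulr0 ?mul0r.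
move=> s p gs /T2_evalP hp; apply/T2_evalP => phi g; rewrite feval_subst.
have /hp : graded_assign (fun v => aeval phi (s v)).
  by apply/graded_homogP => v; rewrite pi_aeval; apply: homog_feval (gs v); apply/graded_homogP.
by move=> <-; apply: eq_feval => v; rewrite pi_aeval.
Qed.

End Evaluation.
Arguments tau {K}. Arguments feval {K}. Arguments bisign {K}. Arguments spanned {K}.
Arguments homog {K}. Arguments bihomog {K}. Arguments nf_deg {K}.

Section Multilinear.
Local Open Scope quotient_scope.
Variable K : fieldType.
Local Notation term := (K * (seq nat * seq nat))%type.
Local Notation EE := (EE K).
Local Notation pi := (\pi_EE : aform K -> EE).

Definition upd (s : fvarT -> term) v t := fun x => if x == v then t else s x.

Fixpoint choice_sum (V : seq fvarT) (L : fvarT -> seq term) (G : (fvarT -> term) -> EE)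
   (s0 : fvarT -> term) : EE :=
  if V is v :: V' then \sum_(t <- L v) choice_sum V' L G (upd s0 v t) else G s0.

Lemma choice_sum_lin (I : Type) (r : seq I) (c : I -> K) V L G s0 :
  \sum_(i <- r) c i *: choice_sum V L (G i) s0
  = choice_sum V L (fun s => \sum_(i <- r) c i *: G i s) s0.
Proof.
elim: V s0 => [|v V IH] s0 //=; under eq_bigr do rewrite scaler_sumr.
by rewrite (@exchange_big EE 0 +%R); apply: eq_bigr => t _; exact: IH.
Qed.

Lemma choice_sum_eq0 V L G s0 :
  (forall s, (forall x, x \in V -> s x \in L x) -> (forall x, x \notin V -> s x = s0 x) ->
     G s = 0) ->
  choice_sum V L G s0 = 0.
Proof.
elim: V s0 => [|v V IH] s0 h /=; first by apply: h.
apply: big1_seq => t /andP[_ tL]; apply: IH => s h1 h2; apply: h => x.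
  rewrite inE; case: (boolP (x \in V)) => [/h1 //|xV]; rewrite orbF => /eqP exv.
  by rewrite exv in xV *; rewrite h2 // /upd eqxx.
by rewrite inE negb_or => /andP[xv xV]; rewrite h2 // /upd (negbTE xv).
Qed.

Lemma prod_expand_at (w : seq fvarT) (H : fvarT -> EE) v (I : Type) (r : seq I) (F : I -> EE) :
  count_mem v w = 1%N -> H v = \sum_(i <- r) F i ->
  \prod_(x <- w) H x = \sum_(i <- r) \prod_(x <- w) (if x == v then F i else H x).
Proof.
move=> cw hv; elim: w cw => [|x w IH] //= cw; rewrite big_cons.
case: (eqVneq x v) => [exv|nxv]; last first.
  move: cw; rewrite /= (negbTE nxv) add0n => /IH ->.
  by rewrite mulr_sumr; apply: eq_bigr => i _; rewrite big_cons (negbTE nxv).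
rewrite exv hv mulr_suml; apply: eq_bigr => i _; rewrite big_cons eqxx.
congr (_ * _); apply: eq_big_seq => x' xw; case: eqP => // exv'.
move: cw; rewrite exv eqxx /= => /eqP; rewrite eqSS => /eqP /count_memPn.
by rewrite -exv' xw.
Qed.

Lemma prod_choice_sum V L s0 (w : seq fvarT) :
  uniq V -> (forall x, x \in V -> count_mem x w = 1%N) ->
  \prod_(x <- w) (if x \in V then pi (L x) else tau (s0 x))
  = choice_sum V L (fun s => \prod_(x <- w) tau (s x)) s0.
Proof.
elim: V s0 => [|v V IH] s0 /= uV hc; first by apply: eq_bigr.
move: uV => /andP[vV uV].
rewrite (@prod_expand_at w _ v _ (L v) tau); last by rewrite inE eqxx /= pi_sum.
  apply: eq_bigr => t _; rewrite -IH //; last by move=> x xV; apply: hc; rewrite inE xV orbT.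
  by apply: eq_bigr => x _; rewrite /upd inE; case: eqP => [->|_] //=; rewrite (negbTE vV).
by apply: hc; rewrite inE eqxx.
Qed.

Fixpoint vins (x : fvarT) (s : seq fvarT) : seq fvarT :=
  if s is y :: s' then (if (y.2 < x.2)%N then y :: vins x s' else x :: s) else [:: x].
Fixpoint vsort (w : seq fvarT) : seq fvarT :=
  if w is x :: w' then vins x (vsort w') else [::].

Section SignedSort.
Variable sg : fvarT -> fvarT -> K.

Fixpoint ins_sign x s : K :=
  if s is y :: s' then (if (y.2 < x.2)%N then sg x y * ins_sign x s' else 1) else 1.
Fixpoint sort_sign w : K :=
  if w is x :: w' then ins_sign x (vsort w') * sort_sign w' else 1.

Variable T : fvarT -> EE.
Hypothesis T_comm : forall x y, T x * T y = sg x y *: (T y * T x).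

Lemma prod_vins x s : T x * \prod_(y <- s) T y = ins_sign x s *: \prod_(y <- vins x s) T y.
Proof.
elim: s => [|y s IH] /=; first by rewrite big_nil big_seq1 scale1r mulr1.
case: ifP => _; last by rewrite scale1r [RHS]big_cons.
by rewrite !big_cons mulrA T_comm -scalerAl -mulrA IH -scalerAr scalerA.
Qed.

Lemma prod_vsort w : \prod_(x <- w) T x = sort_sign w *: \prod_(x <- vsort w) T x.
Proof.
elim: w => [|x w IH] /=; first by rewrite scale1r.
by rewrite big_cons IH -scalerAr prod_vins scalerA mulrC.
Qed.

End SignedSort.

Lemma perm_vsort w : perm_eq (vsort w) w.
Proof.
have perm_vins x s : perm_eq (vins x s) (x :: s).
  elim: s => [|y s IH] //=; case: ifP => _ //.
  by apply/permP => a; rewrite /= (permP IH a) /= addnCA.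
by elim: w => [|x w IH] //=; apply: perm_trans (perm_vins _ _) _; rewrite perm_cons.
Qed.

(* [P x] stands for the parity of the first tensor factor of the basis tensor
   substituted for [x]; the parity of the second factor is the degree [x.1]. *)
Definition var_sign (P : pred fvarT) x y : K := bisign (P x, x.1) (P y, y.1).

(* Zero terms of the right degree, filling in the variables outside [V]. *)
Definition pad_term (x : fvarT) : term := (0, ([::], if x.1 then [:: 0%N] else [::])).

Lemma T2_multilinear (g : fpoly K) V : uniq V -> all (fun m => vsort m.2 == V) g ->
  (forall P, \sum_(m <- g) m.1 * sort_sign (var_sign P) m.2 = 0) -> T2_E0sE0 g.
Proof.
move=> uV hg hs; apply/T2_evalP => phi gr.
pose L v := nf_deg v.1 (phi v).
have hperm m : m \in g -> perm_eq m.2 V.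
  by move=> mg; rewrite -(eqP (allP hg m mg)) perm_sym perm_vsort.
have expand m : m \in g ->
    \prod_(x <- m.2) pi (phi x) = choice_sum V L (fun s => \prod_(x <- m.2) tau (s x)) pad_term.
  move=> mg; rewrite -prod_choice_sum //; last first.
    by move=> x xV; rewrite (permP (hperm _ mg)) count_uniq_mem ?xV.
  by apply: eq_big_seq => x xm; rewrite -(perm_mem (hperm _ mg)) xm graded_nf.
rewrite /feval (eq_big_seq _ (fun m mg => congr1 _ (expand m mg))) choice_sum_lin.
apply: choice_sum_eq0 => s hsL hs0.
have deg_s x : (bideg (s x).2).2 = x.1.
  case: (boolP (x \in V)) => [/hsL|/hs0 ->]; last by rewrite /pad_term /=; case: x.1.
  by move/(allP (nf_deg_homog x.1 (phi x)))/eqP.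
pose P x := (bideg (s x).2).1.
have s_comm x y : tau (s x) * tau (s y) = var_sign P x y *: (tau (s y) * tau (s x)).
  by rewrite tau_comm /var_sign -!deg_s -!surjective_pairing.
rewrite (eq_big_seq (fun m => (m.1 * sort_sign (var_sign P) m.2) *: \prod_(x <- V) tau (s x))).
  by rewrite -scaler_suml hs scale0r.
by move=> m mg; rewrite (prod_vsort s_comm) scalerA (eqP (allP hg m mg)).
Qed.

End Multilinear.

Ltac case_signs := repeat match goal with |- context [?f (?b, ?n)] =>
    let T := type of f in unify T (fvarT -> bool); case: (f (b, n)) end;
  rewrite /= ?expr0 ?expr1; ring.
Ltac multilinear_check :=
  lazymatch goal with |- T2_E0sE0 ?g =>
    apply: (@T2_multilinear _ _ (vsort (head (0, [::]) g).2)) => // P end;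
  rewrite /fcomm /fcirc /fsub /fadd /fscale /fmul /y /z /fvar /=;
  rewrite !big_cons big_nil /var_sign /bisign /bipar /=; case_signs.

Section FirstFactorParity.
Local Open Scope quotient_scope.
Variable K : fieldType.
Local Notation EE := (EE K).
Local Notation pi := (\pi_EE : aform K -> EE).

Lemma bipar_sym d d' : bipar d d' = bipar d' d.
Proof. by rewrite /bipar andbC [d.2 && _]andbC. Qed.

Definition commutator (a b : EE) := a * b - b * a.
Definition anticommutator (a b : EE) := a * b + b * a.

Lemma commutatorDl a a' b : commutator (a + a') b = commutator a b + commutator a' b.
Proof. by rewrite /commutator mulrDl mulrDr opprD addrACA. Qed.
Lemma commutatorDr a b b' : commutator a (b + b') = commutator a b + commutator a b'.
Proof. by rewrite /commutator mulrDl mulrDr opprD addrACA. Qed.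
Lemma anticommutatorDl a a' b : anticommutator (a + a') b = anticommutator a b + anticommutator a' b.
Proof. by rewrite /anticommutator mulrDl mulrDr addrACA. Qed.
Lemma anticommutatorDr a b b' : anticommutator a (b + b') = anticommutator a b + anticommutator a b'.
Proof. by rewrite /anticommutator mulrDl mulrDr addrACA. Qed.

Section Bihomogeneous.
Variables (d d' : bool * bool) (a b : EE).
Hypotheses (ha : bihomog d a) (hb : bihomog d' b).

Lemma bihomog_swap : b * a = (if bipar d d' then - (a * b) else a * b).
Proof.
rewrite (bihomog_comm hb ha) bipar_sym /bisign.
by case: bipar; rewrite ?expr1 ?scaleN1r ?expr0 ?scale1r.
Qed.

Lemma commutator_bihomog :
  commutator a b = if bipar d d' then 2%:R *: (a * b) else 0.
Proof.
by rewrite /commutator bihomog_swap; case: bipar; rewrite ?opprK ?subrr // scaler_nat mulr2n.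
Qed.

Lemma anticommutator_bihomog :
  anticommutator a b = if bipar d d' then 0 else 2%:R *: (a * b).
Proof.
by rewrite /anticommutator bihomog_swap; case: bipar; rewrite ?subrr // scaler_nat mulr2n.
Qed.

End Bihomogeneous.

Lemma prod_anticomm_collect (W : EE) I (s : seq I) (X : I -> EE) B r :
  (forall i, W * X i = - (X i * W)) -> W * B = B * W ->
  exists A, \prod_(i <- s) (X i * W) * (B * W ^+ r) = A * W ^+ (size s + r).
Proof.
move=> hX hB.
suff [A [_ ->]] : exists A, (W * A = A * W \/ W * A = - (A * W)) /\
    \prod_(i <- s) (X i * W) * (B * W ^+ r) = A * W ^+ (size s + r) by exists A.
elim: s => [|i s [A [hA e]]]; first by exists B; rewrite big_nil mul1r; split; first left.
rewrite big_cons -mulrA e /= mulrA -(mulrA (X i)).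
case: hA => hA; rewrite hA.
  exists (X i * A); split; last by rewrite mulrA -mulrA -exprS addSn.
  by right; rewrite [in LHS]mulrA hX mulNr -[in LHS]mulrA hA [in LHS]mulrA.
exists (- (X i * A)); split; last by rewrite mulrN !mulNr mulrA -mulrA -exprS addSn.
left; rewrite [in LHS]mulrN [in LHS]mulrA hX mulNr opprK -[in LHS]mulrA hA.
by rewrite mulrN [in LHS]mulrA mulNr.
Qed.

Definition first_part (b : bool) (phi : fvarT -> aform K) (v : fvarT) : EE :=
  pi [seq m <- nf_deg v.1 (phi v) | (bideg m.2).1 == b].

Lemma bihomog_first_part b phi v : bihomog (b, v.1) (first_part b phi v).
Proof.
exists [seq m <- nf_deg v.1 (phi v) | (bideg m.2).1 == b]; split => //.
apply/allP => m; rewrite mem_filter => /andP[/eqP hm /(allP (nf_deg_homog v.1 (phi v)))/eqP].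
by rewrite -hm => <-; rewrite -surjective_pairing.
Qed.

Lemma graded_first_parts phi v : graded_assign phi ->
  pi (phi v) = first_part false phi v + first_part true phi v.
Proof.
move=> g; rewrite graded_nf // /first_part !pi_sum !big_filter [LHS](bigID (fun m => (bideg m.2).1)).
by rewrite addrC; congr (_ + _); apply: eq_bigl => m; case: (bideg m.2).1.
Qed.

Variable p : nat.
Hypothesis charK : p \in [pchar K].
Hypothesis p_gt2 : (2 < p)%N.

Lemma pcharEE : p \in [pchar EE].
Proof.
apply/andP; split; first exact: pcharf_prime charK.
by rewrite -scaler_nat (pcharf0 charK) scale0r.
Qed.

Lemma double_eq0 (a : EE) : a + a = 0 -> a = 0.
Proof.
have two_unit : (2%:R : K) != 0.
  rewrite -(dvdn_pcharf charK); apply/negP => /dvdn_leq; lia.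
move=> h; have /(congr1 ( *:%R (2%:R^-1))) : (2%:R : K) *: a = 0 by rewrite scaler_nat mulr2n.
by rewrite scalerA mulVf // scale1r scaler0.
Qed.

Lemma bihomog_sq0 d (a : EE) : bihomog d a -> bipar d d -> a * a = 0.
Proof.
move=> ha hd; apply: double_eq0.
by have := anticommutator_bihomog ha ha; rewrite hd.
Qed.

Lemma bihomog11_expp0 (a : EE) : bihomog (true, true) a -> a ^+ p = 0.
Proof.
case=> L [hL ->]; elim: L hL => [|m L IH] /=; first by rewrite expr0n; case: p p_gt2.
move=> /andP[/eqP hm hL]; rewrite (piD [:: m]) -/(tau m).
have hm1 : bihomog (true, true) (tau m) by exists [:: m]; rewrite /= hm eqxx.
have hL1 : bihomog (true, true) (pi L) by exists L.
have cm : GRing.comm (tau m) (pi L) by rewrite /GRing.comm (bihomog_swap hm1 hL1).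
rewrite -!(pFrobenius_autE pcharEE) (pFrobenius_autD_comm pcharEE cm) !pFrobenius_autE.
rewrite IH // addr0 (_ : p = 2 + (p - 2))%N; last by lia.
by rewrite exprD expr2 tau_sq0 ?mul0r // hm.
Qed.

End FirstFactorParity.
Arguments bihomog_sq0 {K p} _ _ {d a}.

Section PowerGenerators.
Local Open Scope quotient_scope.
Variable K : fieldType.
Local Notation EE := (EE K).
Local Notation pi := (\pi_EE : aform K -> EE).
Variable p : nat.
Hypothesis charK : p \in [pchar K].
Hypothesis p_gt2 : (2 < p)%N.

Section GradedAssignment.
Variable phi : fvarT -> aform K.
Hypothesis phi_graded : graded_assign phi.

Local Notation part b v := (first_part b phi v).
Local Notation Z1 := (pi (phi (true, 1%N))).
Local Notation W := (part true (true, 1%N)).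

Lemma commutator_parts b b' v v' : commutator (part b v) (part b' v')
  = if bipar (b, v.1) (b', v'.1) then 2%:R *: (part b v * part b' v') else 0.
Proof. exact: commutator_bihomog (bihomog_first_part _ _ _) (bihomog_first_part _ _ _). Qed.

Lemma anticommutator_parts b b' v v' : anticommutator (part b v) (part b' v')
  = if bipar (b, v.1) (b', v'.1) then 0 else 2%:R *: (part b v * part b' v').
Proof. exact: anticommutator_bihomog (bihomog_first_part _ _ _) (bihomog_first_part _ _ _). Qed.

Lemma comm_y_z1 i :
  pi (phi (false, i)) * Z1 - Z1 * pi (phi (false, i)) = (2%:R *: part true (false, i)) * W.
Proof.
rewrite -/(commutator _ _) !(graded_first_parts _ phi_graded).
by rewrite commutatorDl !commutatorDr !commutator_parts /= !add0r scalerAl.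
Qed.

Lemma anticomm_z_z1 j :
  pi (phi (true, j)) * Z1 + Z1 * pi (phi (true, j)) = (2%:R *: part true (true, j)) * W.
Proof.
rewrite -/(anticommutator _ _) !(graded_first_parts _ phi_graded).
by rewrite anticommutatorDl !anticommutatorDr !anticommutator_parts /= !add0r scalerAl.
Qed.

Lemma sq_z1 : Z1 * Z1 = W * W.
Proof.
rewrite (graded_first_parts _ phi_graded) mulrDl !mulrDr.
rewrite (bihomog_sq0 charK p_gt2 (bihomog_first_part _ _ _)) // add0r addrA.
by rewrite -/(anticommutator _ _) anticommutator_parts /= add0r.
Qed.

Lemma W_anticomm_part_y i : W * (2%:R *: part true (false, i)) = - ((2%:R *: part true (false, i)) * W).
Proof. exact: bihomog_swap (spannedZ _ (bihomog_first_part _ _ _)) (bihomog_first_part _ _ _). Qed.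

Lemma W_comm_part_z j : W * (2%:R *: part true (true, j)) = (2%:R *: part true (true, j)) * W.
Proof. exact: bihomog_swap (spannedZ _ (bihomog_first_part _ _ _)) (bihomog_first_part _ _ _). Qed.

Lemma W_expp0 : W ^+ p = 0.
Proof. exact: (bihomog11_expp0 charK p_gt2 (bihomog_first_part true phi (true, 1%N))). Qed.

End GradedAssignment.

Lemma T2_comms_circ_zpow k n : (1 <= k)%N -> (2 * n + 2 * k - 1)%N = p ->
  T2_E0sE0 (fmul (Defs.fprod [seq fcomm (y K i) (z K 1) | i <- iota 1 (2 * k - 2)])
                 (fmul (fcirc (z K 2) (z K 1)) (Defs.fprod (nseq (2 * n) (z K 1))))).
Proof.
move=> hk hp; apply/T2_evalP => phi g.
rewrite feval_mul feval_prod big_map feval_mul feval_circ feval_prod prodr_nseq !feval_var.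
under eq_bigr do rewrite feval_comm !feval_var comm_y_z1 //.
rewrite anticomm_z_z1 // exprM expr2 sq_z1 // -expr2 -exprM -mulrA -exprS.
have [A ->] := prod_anticomm_collect (iota 1 (2 * k - 2)) (2 * n).+1
  (W_anticomm_part_y phi) (W_comm_part_z phi 2).
by rewrite size_iota (_ : (_ + _)%N = p) ?W_expp0 ?mulr0 //; lia.
Qed.

Lemma T2_comms_zpow k n : (1 <= k)%N -> (2 * n + 2 * k - 1)%N = p ->
  T2_E0sE0 (fmul (Defs.fprod [seq fcomm (y K i) (z K 1) | i <- iota 1 (2 * k - 1)])
                 (Defs.fprod (nseq (2 * n) (z K 1)))).
Proof.
move=> hk hp; apply/T2_evalP => phi g.
rewrite feval_mul feval_prod big_map feval_prod prodr_nseq !feval_var.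
under eq_bigr do rewrite feval_comm !feval_var comm_y_z1 //.
rewrite exprM expr2 sq_z1 // -expr2 -exprM -[_ ^+ (2 * n)]mul1r.
have [A ->] := prod_anticomm_collect (iota 1 (2 * k - 1)) (2 * n)
  (W_anticomm_part_y phi) (etrans (mulr1 _) (esym (mul1r _))).
by rewrite size_iota (_ : (_ + _)%N = p) ?W_expp0 ?mulr0 //; lia.
Qed.

End PowerGenerators.

Theorem lemma13 (K : fieldType) (p : nat)
  (Kinf : forall s : seq K, exists x : K, x \notin s)
  (charK : p \in [pchar K]) (p_gt2 : (2 < p)%N) :
  forall f : fpoly K, in_Ip p f -> T2_E0sE0 f.
Proof.
move=> f; apply; first exact: T2_ideal.
move=> g; rewrite /Ip_gens.
case=> [->|[->|[->|[->|[->|[->|[[b1 [b4 ->]]|[->|[[k [n [hk hp ->]]]|[k [n [hk hp ->]]]]]]]]]]]].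
- by multilinear_check.
- by multilinear_check.
- by multilinear_check.
- by multilinear_check.
- by multilinear_check.
- by multilinear_check.
- by case: b1 b4 => [] []; multilinear_check.
- by multilinear_check.
- exact: (T2_comms_circ_zpow charK p_gt2 hk hp).
- exact: (T2_comms_zpow charK p_gt2 hk hp).
Qed.
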